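(* Let $X$ be a finite set and $V=\mathbb F_2(X)$ the algebra of $\mathbb F_2$-valued functions on $X$ with pointwise product, with basis $x^\mu=\delta_\mu$ ($\mu\in X$), so $x^\mu\circ x^\nu=\delta_{\mu\nu}x^\mu$ and the calculus on $A=\mathbb F_2[x^\mu:\mu\in X]$ has $[\mathrm dx^\mu,x^\nu]=\delta_{\mu\nu}\mathrm dx^\mu$. Let $g=\sum_{\mu\in X}\mathrm dx^\mu\otimes\mathrm dx^\mu$. Suppose $X=T\sqcup S\sqcup\bar S$ is a partition into three disjoint subsets together with a bijection $S\to\bar S$, $s\mapsto\bar s$. Define $\nabla$ and $\sigma$ by $\nabla\mathrm dx^t=0$ for $t\in T$, and $\nabla\mathrm dx^s=\nabla\mathrm dx^{\bar s}=(\mathrm dx^s+\mathrm dx^{\bar s})\otimes(\mathrm dx^s+\mathrm dx^{\bar s})$ for $s\in S$ (extended by the left Leibniz rule), and $\sigma(\mathrm dx^s\otimes\mathrm dx^s)=\mathrm dx^{\bar s}\otimes\mathrm dx^{\bar s}$, $\sigma(\mathrm dx^{\bar s}\otimes\mathrm dx^{\bar s})=\mathrm dx^s\otimes\mathrm dx^s$, $\sigma(\mathrm dx^s\otimes\mathrm dx^{\bar s})=\mathrm dx^s\otimes\mathrm dx^{\bar s}$, $\sigma(\mathrm dx^{\bar s}\otimes\mathrm dx^s)=\mathrm dx^{\bar s}\otimes\mathrm dx^s$ for $s\in S$, and $\sigma(\mathrm dx^\mu\otimes\mathrm dx^\nu)=\mathrm dx^\nu\otimes\mathrm dx^\mu$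 on all other pairs of generators (extended as a left module map). Then $g$ is a quantum metric, $(\nabla,\sigma)$ is a quantum Levi-Civita connection for $g$, and $R_\nabla=0$.
   Context: Standing setup. Work over $\mathbb F_2$. Let $(V,\circ)$ be a commutative associative algebra over $\mathbb F_2$ with basis $x^1,\dots,x^n$ and structure constants $x^\mu\circ x^\nu=\sum_\rho V^{\mu\nu}{}_\rho x^\rho$. Let $A=\mathbb F_2[x^1,\dots,x^n]$ be the polynomial algebra on the same symbols. The associated differential calculus is the $A$-bimodule $\Omega^1$ which is free as a left $A$-module on $\mathrm dx^1,\dots,\mathrm dx^n$, with right action determined by $\mathrm dx^\mu\, x^\nu=x^\nu\,\mathrm dx^\mu+\sum_\rho V^{\mu\nu}{}_\rho\,\mathrm dx^\rho$, together with the unique map $\mathrm d:A\to\Omega^1$ satisfying the Leibniz rule $\mathrm d(ab)=(\mathrm da)b+a\,\mathrm db$, $\mathrm d(x^\mu)=\mathrm dx^\mu$, $\mathrm d1=0$. The bimodule $\Omega^1\otimes_A\Omega^1$ is free as a left module on $\mathrm dx^\mu\otimes\mathrm dx^\nu$. $\Omega^2$ is the quotient of $\Omega^1\otimes_A\Omega^1$ by the sub-bimodule generated by $\mathrm dx^\mu\otimes\mathrm dx^\mu$ and $\mathrm dx^\mu\otimes\mathrm dx^\nu+\mathrm dx^\nu\otimes \mathrm dx^\mu$; the quotient map is denoted $\wedge$, and $\mathrm d$ is extended to $\Omega^1$ by $\mathrm d(a\,\mathrm dx^\mu)=\mathrm da\wedge\mathrm dx^\mu$. A quantum metric is $g=\sum_{\mu,\nu}g_{\mu\nu}\mathrm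 dx^\mu\otimes\mathrm dx^\nu$ with constants $g_{\mu\nu}\in\mathbb F_2$, $g_{\mu\nu}=g_{\nu\mu}$, the matrix $(g_{\mu\nu})$ invertible, and $g$ central: $x^\rho g=g x^\rho$ for all $\rho$. A bimodule connection is a pair $(\nabla,\sigma)$ with $\nabla:\Omega^1\to\Omega^1\otimes_A\Omega^1$ additive, $\nabla(a\omega)=a\nabla\omega+\mathrm da\otimes\omega$, and $\sigma:\Omega^1\otimes_A\Omega^1\to\Omega^1\otimes_A\Omega^1$ a bimodule map with $\nabla(\omega a)=(\nabla\omega)a+\sigma(\omega\otimes\mathrm da)$. It has constant coefficients if $\nabla\mathrm dx^\mu=\sum\Gamma^\mu{}_{\nu\rho}\mathrm dx^\nu\otimes\mathrm dx^\rho$ with $\Gamma^\mu{}_{\nu\rho}\in\mathbb F_2$. A quantum Levi-Civita connection (QLC) for $g$ is a bimodule connection with $\sigma$ invertible, torsion free ($\wedge\nabla=\mathrm d$ on $\Omega^1$) and metric compatible ($(\nabla\otimes\mathrm{id})g+(\sigma\otimes\mathrm{id})(\mathrm{id}\otimes\nabla)g=0$). Its curvature is $R_\nabla=(\mathrm d\otimes\mathrm{id}-(\wedge\otimes\mathrm{id})(\mathrm{id}\otimes\nabla))\nabla:\Omega^1\to\Omega^2\otimes_A\Omega^1$. *)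

(* Polynomials in A = F_2[x^mu : mu in X] are represented as lists of
   monomials read as their sum mod 2; equality is coefficientwise (peq).
   Omega^1, Omega^1 (x)_A Omega^1, Omega^1 (x)_A Omega^1 (x)_A Omega^1 are free
   left A-modules on dx^mu, dx^mu (x) dx^nu, ... and are represented by their
   coefficient functions. *)
From HB Require Import structures.
From mathcomp Require Import all_boot all_order.
Set Implicit Arguments.
Unset Strict Implicit.
Unset Printing Implicit Defensive.

Section Calculus.
Variable X : finType.

Definition mon := {ffun X -> nat}.
Definition poly := seq mon.
Definition monmul (m1 m2 : mon) : mon := [ffun i => m1 i + m2 i].
Definition mon1 : mon := [ffun _ => 0].
Definition pzero : poly := [::].
Definition pone : poly := [:: mon1].
Definition padd (p q : poly) : poly := p ++ q.
Definition pmul (p q : poly) : poly := [seq monmul m1 m2 | m1 <- p, m2 <- q].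
Definition pvar (mu : X) : poly := [:: [ffun i => nat_of_bool (i == mu)]].
Definition pconst (b : bool) : poly := if b then pone else pzero.
Definition coef (p : poly) (m : mon) : bool := odd (count_mem m p).
Definition peq (p q : poly) : Prop := forall m, coef p m = coef q m.
Definition psum (F : X -> poly) : poly := flatten [seq F i | i <- enum X].
Definition monvars (m : mon) : seq X := flatten [seq nseq (m i) i | i <- enum X].

Definition form1 := X -> poly.
Definition form2 := X -> X -> poly.
Definition form3 := X -> X -> X -> poly.

Definition eq1 (w w' : form1) := forall a, peq (w a) (w' a).
Definition eq2 (t t' : form2) := forall a b, peq (t a b) (t' a b).
Definition eq3 (t t' : form3) := forall a b c, peq (t a b c) (t' a b c).
Definition zero1 : form1 := fun _ => pzero.
Definition zero2 : form2 := fun _ _ => pzero.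
Definition zero3 : form3 := fun _ _ _ => pzero.
Definition add1 (w w' : form1) : form1 := fun a => padd (w a) (w' a).
Definition add2 (t t' : form2) : form2 := fun a b => padd (t a b) (t' a b).
Definition add3 (t t' : form3) : form3 := fun a b c => padd (t a b c) (t' a b c).
Definition lmul1 (p : poly) (w : form1) : form1 := fun a => pmul p (w a).
Definition lmul2 (p : poly) (t : form2) : form2 := fun a b => pmul p (t a b).
Definition lmul3 (p : poly) (t : form3) : form3 := fun a b c => pmul p (t a b c).
Definition psum1 (F : X -> form1) : form1 := fun a => psum (fun i => F i a).
Definition psum2 (F : X -> form2) : form2 := fun a b => psum (fun i => F i a b).
Definition psum3 (F : X -> form3) : form3 := fun a b c => psum (fun i => F i a b c).
Definition e1 (mu : X) : form1 := fun a => pconst (a == mu).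
Definition e2 (mu nu : X) : form2 := fun a b => pconst ((a == mu) && (b == nu)).
(* w (x) dx^nu  and  t (x) dx^nu *)
Definition tb1 (w : form1) (nu : X) : form2 :=
  fun a b => if b == nu then w a else pzero.
Definition tb2 (t : form2) (nu : X) : form3 :=
  fun a b c => if c == nu then t a b else pzero.

Section Structure.
(* structure constants:  x^mu o x^nu = sum_rho V mu nu rho x^rho *)
Variable V : X -> X -> X -> bool.

(* right action of x^nu on Omega^1:
   dx^mu x^nu = x^nu dx^mu + sum_rho V^{mu nu}_rho dx^rho *)
Definition R1 (nu : X) (w : form1) : form1 :=
  fun rho => padd (pmul (pvar nu) (w rho))
                  (psum (fun mu => pmul (pconst (V mu nu rho)) (w mu))).
Definition ract1_list (w : form1) (s : seq X) : form1 :=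
  foldl (fun w nu => R1 nu w) w s.
Definition ract1 (w : form1) (p : poly) : form1 :=
  fun rho => flatten [seq ract1_list w (monvars m) rho | m <- p].
(* right action on Omega^1 (x)_A Omega^1 :
   (t_{al be} dx^al (x) dx^be) a = t_{al be} dx^al (x) (dx^be a) *)
Definition ract2 (t : form2) (p : poly) : form2 :=
  fun ga de => flatten [seq pmul (t al be) (ract1 (e1 al) (ract1 (e1 be) p de) ga)
                       | al <- enum X, be <- enum X].
(* the exterior derivative d : A -> Omega^1, the map with
   d(x^nu b) = (dx^nu) b + x^nu db, d 1 = 0, extended additively *)
Fixpoint dlist (s : seq X) : form1 :=
  match s with
  | [::] => zero1
  | nu :: s' => add1 (ract1_list (e1 nu) s') (lmul1 (pvar nu) (dlist s'))
  end.
Definition dpoly (p : poly) : form1 :=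
  fun rho => flatten [seq dlist (monvars m) rho | m <- p].
(* representative in Omega^1 (x) Omega^1 of d(sum_be w_be dx^be) = sum_be dw_be /\ dx^be *)
Definition dform1 (w : form1) : form2 := fun al be => dpoly (w be) al.
Definition tens11 (w eta : form1) : form2 :=
  fun al be => flatten [seq pmul (w mu) (ract1 (e1 mu) (eta be) al) | mu <- enum X].
Definition tens12 (w : form1) (t : form2) : form3 :=
  fun ga al be => flatten [seq pmul (w mu) (ract1 (e1 mu) (t al be) ga) | mu <- enum X].
Definition sigma_id (sigma : form2 -> form2) (t : form3) : form3 :=
  fun a b c => sigma (fun a' b' => t a' b' c) a b.

(* the sub-bimodule N2 of Omega^1 (x)_A Omega^1 generated by dx^mu(x)dx^mu and
   dx^mu(x)dx^nu + dx^nu(x)dx^mu ; Omega^2 = (Omega^1(x)Omega^1)/N2 *)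
Inductive inN2 : form2 -> Prop :=
| N2_gen1 mu : inN2 (e2 mu mu)
| N2_gen2 mu nu : inN2 (add2 (e2 mu nu) (e2 nu mu))
| N2_zero : inN2 zero2
| N2_add t t' : inN2 t -> inN2 t' -> inN2 (add2 t t')
| N2_lmul p t : inN2 t -> inN2 (lmul2 p t)
| N2_rmul p t : inN2 t -> inN2 (ract2 t p)
| N2_eq t t' : inN2 t -> eq2 t t' -> inN2 t'.

(* the kernel N3 of Omega^1(x)Omega^1(x)Omega^1 -> Omega^2 (x)_A Omega^1,
   i.e. the image of N2 (x)_A Omega^1 *)
Inductive inN3 : form3 -> Prop :=
| N3_gen t nu : inN2 t -> inN3 (tb2 t nu)
| N3_zero : inN3 zero3
| N3_add t t' : inN3 t -> inN3 t' -> inN3 (add3 t t')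
| N3_eq t t' : inN3 t -> eq3 t t' -> inN3 t'.

Definition gform (g : X -> X -> bool) : form2 := fun a b => pconst (g a b).

Definition is_qmetric (g : X -> X -> bool) : Prop :=
  (forall mu nu, g mu nu = g nu mu) /\
  (exists h : X -> X -> bool, forall mu ka,
      \big[addb/false]_(nu : X) (g mu nu && h nu ka) = (mu == ka) /\
      \big[addb/false]_(nu : X) (h mu nu && g nu ka) = (mu == ka)) /\
  (forall rho, eq2 (lmul2 (pvar rho) (gform g)) (ract2 (gform g) (pvar rho))).

Definition bimodule_map2 (sigma : form2 -> form2) : Prop :=
  (forall t t', eq2 t t' -> eq2 (sigma t) (sigma t')) /\
  (forall t t', eq2 (sigma (add2 t t')) (add2 (sigma t) (sigma t'))) /\
  (forall p t, eq2 (sigma (lmul2 p t)) (lmul2 p (sigma t))) /\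
  (forall p t, eq2 (sigma (ract2 t p)) (ract2 (sigma t) p)).

Definition invertible2 (sigma : form2 -> form2) : Prop :=
  exists sigma' : form2 -> form2,
    forall t, eq2 (sigma (sigma' t)) t /\ eq2 (sigma' (sigma t)) t.

Definition bimodule_connection (nabla : form1 -> form2) (sigma : form2 -> form2) : Prop :=
  (forall w w', eq1 w w' -> eq2 (nabla w) (nabla w')) /\
  (forall w w', eq2 (nabla (add1 w w')) (add2 (nabla w) (nabla w'))) /\
  (forall p w, eq2 (nabla (lmul1 p w)) (add2 (lmul2 p (nabla w)) (tens11 (dpoly p) w))) /\
  bimodule_map2 sigma /\
  (forall w p, eq2 (nabla (ract1 w p))
                   (add2 (ract2 (nabla w) p) (sigma (tens11 w (dpoly p))))).

(* wedge o nabla = d  (over F_2, minus = plus) *)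
Definition torsion_free (nabla : form1 -> form2) : Prop :=
  forall w, inN2 (add2 (nabla w) (dform1 w)).

Definition metric_compatible (g : X -> X -> bool) (nabla : form1 -> form2)
    (sigma : form2 -> form2) : Prop :=
  eq3 (add3 (psum3 (fun mu => psum3 (fun nu =>
               lmul3 (pconst (g mu nu)) (tb2 (nabla (e1 mu)) nu))))
            (sigma_id sigma (psum3 (fun mu => psum3 (fun nu =>
               lmul3 (pconst (g mu nu)) (tens12 (e1 mu) (nabla (e1 nu))))))))
      zero3.

Definition is_QLC (g : X -> X -> bool) (nabla : form1 -> form2)
    (sigma : form2 -> form2) : Prop :=
  bimodule_connection nabla sigma /\ invertible2 sigma /\
  torsion_free nabla /\ metric_compatible g nabla sigma.

(* representative of R_nabla(w) = (d(x)id - (wedge(x)id)(id(x)nabla)) nabla w,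
   writing nabla w = sum_be xi_be (x) dx^be *)
Definition curvature (nabla : form1 -> form2) (w : form1) : form3 :=
  let t := nabla w in
  psum3 (fun be => let xi := fun al => t al be in
     add3 (tb2 (dform1 xi) be) (tens12 xi (nabla (e1 be)))).

Definition curvature_zero (nabla : form1 -> form2) : Prop :=
  forall w, inN3 (curvature nabla w).

End Structure.

Definition deltaV (mu nu rho : X) : bool := (mu == nu) && (nu == rho).
Definition gdiag (mu nu : X) : bool := mu == nu.

Section Prop51.
Variables (T S Sbar : {set X}) (bar : X -> X).

(* s |-> bar s on S, bar s |-> s on Sbar *)
Definition partner (mu : X) : X :=
  if mu \in S then bar mu else odflt mu [pick s in S | bar s == mu].

Definition Gam51 (mu : X) : form2 :=
  if mu \in T then zero2
  else fun a b => pconst (((a == mu) || (a == partner mu)) && ((b == mu) || (b == partner mu))).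

(* nabla extended by the left Leibniz rule *)
Definition nabla51 (w : form1) : form2 :=
  add2 (psum2 (fun mu => lmul2 (w mu) (Gam51 mu)))
       (psum2 (fun mu => tb1 (dpoly deltaV (w mu)) mu)).

Definition sig51 (mu nu : X) : form2 :=
  if mu \in S :|: Sbar then
    (if nu == mu then e2 (partner mu) (partner mu)
     else if nu == partner mu then e2 mu nu
     else e2 nu mu)
  else e2 nu mu.

(* sigma extended as a left module map *)
Definition sigma51 (t : form2) : form2 :=
  fun a b => flatten [seq pmul (t mu nu) (sig51 mu nu a b) | mu <- enum X, nu <- enum X].

End Prop51.
End Calculus.

(* For the calculus of F_2(X) one has dx^r p = tau_r(p) dx^r, where tau_r is the
   ring automorphism of A = F_2[x] substituting x^r + 1 for x^r; consequently
   dp = sum_r (tau_r p - p) dx^r.  Reading A as {mpoly 'Z_2[#|X|]} and the free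
   modules through their coefficient functions, every axiom becomes an identity
   between coefficients built from the commuting involutions tau_r.  Over F_2 a
   tensor whose coefficient matrix is symmetric lies in the kernel of the wedge
   product, so torsion freeness and flatness reduce to symmetry in the first two
   indices; the curvature coefficient of dx^a (x) dx^b (x) dx^c is the second
   difference (tau_a - 1)(tau_b - 1) w_c.  Finally nabla dx^mu only depends on the
   pair {s, bar s} containing mu, and sigma permutes index pairs involutively,
   preserving tau_a tau_b. *)

From HB Require Import structures.
From mathcomp Require Import all_boot all_order all_algebra.
From mathcomp Require Import ring.
From mathcomp.multinomials Require Import mpoly.
From Pilot Require Import Defs.
Import GRing.Theory.
Set Implicit Arguments.
Unset Strict Implicit.
Unset Printing Implicit Defensive.
Local Open Scope ring_scope.

Lemma comp_mpolyA (n k l : nat) (R : comNzRingType) (lq : n.-tuple {mpoly R[k]})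
    (lr : k.-tuple {mpoly R[l]}) (p : {mpoly R[n]}) :
  (p \mPo lq) \mPo lr = p \mPo [tuple tnth lq i \mPo lr | i < n].
Proof.
rewrite (comp_mpolyEX p lq) raddf_sum [RHS]comp_mpolyEX; apply: eq_bigr => m _.
rewrite /= comp_mpolyZ !comp_mpolyX rmorph_prod; congr (_ *: _); apply: eq_bigr => i _.
by rewrite rmorphXn tnth_mktuple.
Qed.

Section FunctionAlgebraCalculus.
Variable X : finType.
Local Notation n := #|X|.
Local Notation R := {mpoly 'Z_2[n]}.

Lemma natr2_eq0 : (2%:R : R) = 0.
Proof. by rewrite -mpolyC_nat; congr _%:MP; apply/val_inj. Qed.

Lemma pchar2 : 2 \in [pchar R].
Proof. by rewrite inE natr2_eq0 eqxx. Qed.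

Definition var_ord (i : X) : 'I_n := enum_rank i.
Definition multinom_of (m : mon X) : 'X_{1..n} := [multinom m (enum_val j) | j < n].
Definition interp (p : Defs.poly X) : R := \sum_(m <- p) 'X_[multinom_of m].

Lemma multinom_ofE m i : multinom_of m (var_ord i) = m i.
Proof. by rewrite mnmE enum_rankK. Qed.

Lemma multinom_of_inj : injective multinom_of.
Proof. by move=> m1 m2 e; apply/ffunP => i; rewrite -!multinom_ofE e. Qed.

Lemma multinom_of_surj (k : 'X_{1..n}) : k = multinom_of [ffun i => k (var_ord i)].
Proof. by apply/mnmP => j; rewrite mnmE ffunE /var_ord enum_valK. Qed.

Lemma mcoeff_interp p m : (interp p)@_(multinom_of m) = (coef p m)%:R.
Proof.
have nat_Z2 k : (k%:R : 'Z_2) = (odd k)%:R.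
  by apply/val_inj; rewrite /= !Zp_nat /= modn2; case: (odd k).
rewrite /interp /coef -nat_Z2; elim: p => [|m' p IH]; first by rewrite big_nil mcoeff0.
by rewrite big_cons mcoeffD IH mcoeffX (inj_eq multinom_of_inj) /= natrD eq_sym.
Qed.

Lemma peqP p q : peq p q <-> interp p = interp q.
Proof.
split=> [e | e m].
  by apply/mpolyP => k; rewrite [k]multinom_of_surj !mcoeff_interp e.
have := mcoeff_interp p m; rewrite e mcoeff_interp.
by case: (coef p m); case: (coef q m) => // /(congr1 val).
Qed.

Lemma interp_cat p q : interp (p ++ q) = interp p + interp q.
Proof. by rewrite /interp big_cat. Qed.

Lemma interp_padd p q : interp (padd p q) = interp p + interp q.
Proof. exact: interp_cat. Qed.

Lemma interp_flatten (I : Type) (s : seq I) (F : I -> Defs.poly X) :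
  interp (flatten [seq F i | i <- s]) = \sum_(i <- s) interp (F i).
Proof.
elim: s => [|i s IH]; first by rewrite big_nil /interp big_nil.
by rewrite /= interp_cat IH big_cons.
Qed.

Lemma interp_allpairs (I J : Type) (s : seq I) (t : seq J) (F : I -> J -> Defs.poly X) :
  interp (flatten [seq F i j | i <- s, j <- t]) = \sum_(i <- s) \sum_(j <- t) interp (F i j).
Proof.
elim: s => [|i s IH]; first by rewrite big_nil /interp big_nil.
by rewrite /= flatten_cat interp_cat IH interp_flatten big_cons.
Qed.

Lemma interp_psum F : interp (psum F) = \sum_(i <- enum X) interp (F i).
Proof. exact: interp_flatten. Qed.

Lemma interp_pmul p q : interp (pmul p q) = interp p * interp q.
Proof.
rewrite /pmul /interp; elim: p => [|m p IH]; first by rewrite !big_nil mul0r.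
rewrite /= big_cat IH big_cons mulrDl big_map mulr_sumr; congr (_ + _).
rewrite mulr_sumr; apply: eq_bigr => m' _; rewrite -mpolyXD; congr 'X_[_].
by apply/mnmP => j; rewrite mnmDE !mnmE ffunE.
Qed.

Lemma interp_pconst b : interp (pconst X b) = b%:R.
Proof.
case: b; last by rewrite /interp big_nil.
rewrite /interp big_seq1 -mpolyX0; congr 'X_[_].
by apply/mnmP => j; rewrite mnm0E mnmE ffunE.
Qed.

Lemma interp_pvar mu : interp (pvar mu) = 'X_(var_ord mu).
Proof.
rewrite /interp big_seq1; congr 'X_[_]; apply/mnmP => j.
by rewrite mnm1E mnmE ffunE -(inj_eq enum_val_inj) enum_rankK eq_sym.
Qed.

Lemma interp_pzero : interp (pzero X) = 0.
Proof. exact: big_nil. Qed.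

Definition shift (r i : X) : R := 'X_(var_ord i) + (i == r)%:R.
Definition shift_tuple (r : X) : n.-tuple R := [tuple shift r (enum_val j) | j < n].
Local Notation tau r := (comp_mpoly (shift_tuple r)).

Lemma tau_X r i : tau r 'X_(var_ord i) = shift r i.
Proof. by rewrite comp_mpolyXU -tnth_nth tnth_mktuple enum_rankK. Qed.

Lemma comp_multinom (h : X -> R) m :
  'X_[multinom_of m] \mPo [tuple h (enum_val j) | j < n] = \prod_(nu <- monvars m) h nu.
Proof.
have prod_nseq k a : \prod_(x <- nseq k a) h x = h a ^+ k.
  by elim: k => [|k IH]; rewrite ?big_nil ?expr0 // big_cons IH exprS.
rewrite comp_mpolyX /monvars big_flatten big_map /= [RHS]big_enum /= (reindex var_ord) /=.
  by apply: eq_bigr => i _; rewrite prod_nseq tnth_mktuple enum_rankK multinom_ofE.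
by exists enum_val => j; rewrite /var_ord ?enum_valK ?enum_rankK.
Qed.

Lemma mpolyX_monvars m : 'X_[multinom_of m] = \prod_(nu <- monvars m) 'X_(var_ord nu) :> R.
Proof.
rewrite -(comp_multinom (fun nu => 'X_(var_ord nu))).
have -> : [tuple 'X_(var_ord (enum_val j)) | j < n] = [tuple 'X_j | j < n] :> n.-tuple R.
  by apply: eq_mktuple => j; rewrite /var_ord enum_valK.
by rewrite comp_mpoly_id.
Qed.

Lemma tau_tau a b (q : R) :
  tau a (tau b q) = q \mPo [tuple 'X_j + (enum_val j == a)%:R + (enum_val j == b)%:R | j < n].
Proof.
rewrite comp_mpolyA; congr (q \mPo _); apply: eq_from_tnth => j.
rewrite !tnth_mktuple /shift raddfD /= rmorph_nat /= -[j]enum_valK tau_X enum_valK.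
by rewrite /shift /var_ord enum_valK.
Qed.

Lemma tauM r : {morph tau r : p q / p * q}.
Proof. exact: rmorphM. Qed.

Lemma tauC a b (q : R) : tau a (tau b q) = tau b (tau a q).
Proof. by rewrite !tau_tau; congr (q \mPo _); apply: eq_mktuple => j; rewrite addrAC. Qed.

Lemma tauK a (q : R) : tau a (tau a q) = q.
Proof.
rewrite tau_tau -[RHS]comp_mpoly_id; congr (q \mPo _); apply: eq_mktuple => j.
by rewrite -addrA (addrr_pchar2 pchar2) addr0.
Qed.

(* [ring] has to see the [tau]-images as atoms: left visible, it tries to reify
   through [comp_mpoly] and does not terminate in reasonable time. *)
Ltac ring_char2 :=
  rewrite ?comp_mpolyD ?comp_mpolyN ?comp_mpoly0 ?tauM;
  repeat match goal with |- context [comp_mpoly ?l ?q] =>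
    let y := fresh "y" in set y := comp_mpoly l q; clearbody y end;
  rewrite ?(oppr_pchar2 pchar2); ring: natr2_eq0.

Lemma sum_enum_only1 (F : X -> R) a :
  (forall i, i != a -> F i = 0) -> \sum_(i <- enum X) F i = F a.
Proof. by move=> Fa; rewrite big_enum /=; apply: big_only1 => // i /Fa. Qed.
Arguments sum_enum_only1 F a : clear implicits.

Lemma sum_enum_delta (F : X -> R) a : \sum_(i <- enum X) F i * (i == a)%:R = F a.
Proof. by rewrite (sum_enum_only1 _ a) ?eqxx ?mulr1 // => i /negbTE->; rewrite mulr0. Qed.

Local Notation V := (@deltaV X).

Lemma interp_e1 mu a : interp (e1 mu a) = (a == mu)%:R.
Proof. exact: interp_pconst. Qed.

Lemma interp_e2 mu nu a b : interp (e2 mu nu a b) = ((a == mu) && (b == nu))%:R.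
Proof. exact: interp_pconst. Qed.

Lemma interp_R1 nu w rho : interp (R1 V nu w rho) = shift rho nu * interp (w rho).
Proof.
rewrite /R1 interp_padd interp_pmul interp_pvar interp_psum.
rewrite (sum_enum_only1 _ nu) => [|i /negbTE inu]; last first.
  by rewrite interp_pmul interp_pconst /deltaV inu mul0r.
rewrite interp_pmul interp_pconst /deltaV eqxx /shift.
by case: eqP => [->|_]; rewrite ?mul0r ?addr0 // mul1r mulrDl mul1r.
Qed.

Lemma interp_ract1_list s w rho :
  interp (ract1_list V w s rho) = interp (w rho) * \prod_(nu <- s) shift rho nu.
Proof.
elim: s w => [|nu s IH] w /=; first by rewrite big_nil mulr1.
by rewrite IH interp_R1 big_cons mulrA [interp _ * _]mulrC.
Qed.

Lemma tau_interp r p : tau r (interp p) = \sum_(m <- p) \prod_(nu <- monvars m) shift r nu.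
Proof. by rewrite raddf_sum; apply: eq_bigr => m _; exact: comp_multinom. Qed.

Lemma interp_ract1 w p rho : interp (ract1 V w p rho) = interp (w rho) * tau rho (interp p).
Proof.
rewrite /ract1 interp_flatten tau_interp mulr_sumr.
by apply: eq_bigr => m _; exact: interp_ract1_list.
Qed.

Lemma interp_ract2 t p a b :
  interp (ract2 V t p a b) = interp (t a b) * tau a (tau b (interp p)).
Proof.
rewrite /ract2 interp_allpairs (sum_enum_only1 _ a) => [|i /negbTE ia].
  rewrite (sum_enum_only1 _ b) => [|j /negbTE jb].
    by rewrite interp_pmul !interp_ract1 !interp_e1 !eqxx !mul1r.
  by rewrite interp_pmul !interp_ract1 !interp_e1 eq_sym jb mul0r rmorph0 !mulr0.
by rewrite big1 // => j _; rewrite interp_pmul interp_ract1 interp_e1 eq_sym ia mul0r mulr0.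
Qed.

Lemma interp_dlist s rho : interp (dlist V s rho) =
  \prod_(nu <- s) shift rho nu - \prod_(nu <- s) 'X_(var_ord nu).
Proof.
elim: s => [|nu s IH]; first by rewrite /= /interp big_nil !big_nil subrr.
rewrite /= /add1 /lmul1 interp_padd interp_pmul IH interp_pvar interp_ract1_list.
by rewrite interp_e1 !big_cons /shift eq_sym; ring.
Qed.

Lemma interp_dpoly p rho : interp (dpoly V p rho) = tau rho (interp p) - interp p.
Proof.
rewrite /dpoly interp_flatten tau_interp [interp p]/interp -sumrB; apply: eq_bigr => m _.
by rewrite interp_dlist mpolyX_monvars.
Qed.

Lemma interp_tens11 w e a b :
  interp (tens11 V w e a b) = interp (w a) * tau a (interp (e b)).
Proof.
rewrite /tens11 interp_flatten (sum_enum_only1 _ a) => [|i /negbTE ia].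
  by rewrite interp_pmul interp_ract1 interp_e1 eqxx mul1r.
by rewrite interp_pmul interp_ract1 interp_e1 eq_sym ia mul0r mulr0.
Qed.

Lemma interp_tens12 w t c a b :
  interp (tens12 V w t c a b) = interp (w c) * tau c (interp (t a b)).
Proof.
rewrite /tens12 interp_flatten (sum_enum_only1 _ c) => [|i /negbTE ic].
  by rewrite interp_pmul interp_ract1 interp_e1 eqxx mul1r.
by rewrite interp_pmul interp_ract1 interp_e1 eq_sym ic mul0r mulr0.
Qed.

Lemma inN2_flatten (F : X -> form2 X) s :
  (forall i, inN2 V (F i)) -> inN2 V (fun a b => flatten [seq F i a b | i <- s]).
Proof.
move=> F_N2; elim: s => [|i s IH]; first exact: N2_eq (N2_zero V) _.
exact: N2_eq (N2_add (F_N2 i) IH) _.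
Qed.

Lemma inN3_flatten (F : X -> form3 X) s :
  (forall i, inN3 V (F i)) -> inN3 V (fun a b c => flatten [seq F i a b c | i <- s]).
Proof.
move=> F_N3; elim: s => [|i s IH]; first exact: N3_eq (N3_zero V) _.
exact: N3_eq (N3_add (F_N3 i) IH) _.
Qed.

(* Each unordered pair {a, b} is counted once, in increasing enumeration order. *)
Definition sym_part (t : form2 X) (a b : X) : form2 X :=
  if (var_ord a < var_ord b)%N then lmul2 (t a b) (add2 (e2 a b) (e2 b a))
  else if a == b then lmul2 (t a b) (e2 a b) else @zero2 X.

Lemma sym_part_N2 t a b : inN2 V (sym_part t a b).
Proof.
rewrite /sym_part; case: ifP => _; first exact/N2_lmul/N2_gen2.
by case: eqP => [->|_]; [exact/N2_lmul/N2_gen1 | exact: N2_zero].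
Qed.

Lemma interp_sym_part t a b x y : interp (sym_part t a b x y) =
  interp (t a b) * (((var_ord a < var_ord b)%N || (a == b))%:R * ((x == a) && (y == b))%:R
                    + (var_ord a < var_ord b)%N%:R * ((x == b) && (y == a))%:R).
Proof.
rewrite /sym_part; case: ifP => _ /=.
  by rewrite interp_pmul interp_padd !interp_e2 !mul1r.
case: eqP => [->|_]; last by rewrite /zero2 interp_pzero !mul0r addr0 mulr0.
by rewrite interp_pmul interp_e2 mul1r mul0r addr0.
Qed.

Lemma inN2_sym t : (forall a b, interp (t a b) = interp (t b a)) -> inN2 V t.
Proof.
move=> t_sym.
apply: N2_eq (inN2_flatten (enum X) (fun a => inN2_flatten (enum X) (sym_part_N2 t a))) _.
move=> x y; apply/peqP; rewrite interp_flatten.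
under eq_bigr do rewrite interp_flatten.
under eq_bigr do under eq_bigr do rewrite interp_sym_part mulrDr.
under eq_bigr do rewrite big_split /=; rewrite big_split /=.
rewrite (sum_enum_only1 _ x) => [|a /negbTE ax]; last first.
  by rewrite big1 // => b _; rewrite [x == a]eq_sym ax /= !mulr0.
rewrite (sum_enum_only1 _ y) => [|b /negbTE yb]; last by rewrite [y == b]eq_sym yb andbF /= !mulr0.
rewrite (sum_enum_only1 _ y) => [|a /negbTE ay]; last first.
  by rewrite big1 // => b _; rewrite [y == a]eq_sym ay andbF /= !mulr0.
rewrite (sum_enum_only1 _ x) => [|b /negbTE xb]; last by rewrite [x == b]eq_sym xb /= !mulr0.
rewrite !eqxx /= !mulr1 (t_sym y x) -mulrDr -[RHS]mulr1; congr (_ * _).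
case: ltngtP => [_|yx|/val_inj/enum_rank_inj ->] /=; rewrite ?eqxx ?addr0 //.
by case: eqP yx => [->|_]; rewrite ?ltnn ?add0r.
Qed.

Lemma inN3_sym t : (forall a b c, interp (t a b c) = interp (t b a c)) -> inN3 V t.
Proof.
move=> t_sym.
apply: N3_eq (inN3_flatten (enum X) (fun c => N3_gen c (inN2_sym (fun a b => t_sym a b c)))) _.
move=> a b c; apply/peqP; rewrite interp_flatten (sum_enum_only1 _ c) /tb2 ?eqxx //.
by move=> i /negbTE ic; rewrite eq_sym ic interp_pzero.
Qed.

Lemma gdiag_qmetric : is_qmetric V (@gdiag X).
Proof.
split; first by move=> mu nu; rewrite /gdiag eq_sym.
split.
  exists (@gdiag X) => mu ka; rewrite /gdiag.
  suff -> : \big[addb/false]_(nu : X) ((mu == nu) && (nu == ka)) = (mu == ka) by [].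
  by rewrite (bigD1 mu) //= eqxx big1 ?addbF // => i /negbTE; rewrite eq_sym => ->.
move=> rho a b; apply/peqP; rewrite interp_pmul interp_ract2 /gform interp_pconst.
rewrite /gdiag; case: eqP => [->|_]; first by rewrite tauK mulr1 mul1r.
by rewrite mulr0 mul0r.
Qed.

Section Proposition51.
Variables (T S Sbar : {set X}) (bar : X -> X).
Hypotheses (hTS : [disjoint T & S]) (hTSbar : [disjoint T & Sbar])
    (hSSbar : [disjoint S & Sbar]) (hcover : T :|: S :|: Sbar = [set: X])
    (hinj : {in S &, injective bar}) (himg : bar @: S = Sbar).
Local Notation SS := (S :|: Sbar).
Local Notation pt := (partner S bar).

Lemma notin_T mu : (mu \notin T) = (mu \in SS).
Proof.
have := in_setT mu; rewrite -hcover !in_setU.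
case muT: (mu \in T) => /=; last by move->.
by rewrite (disjointFr hTS muT) (disjointFr hTSbar muT).
Qed.

Lemma partner_spec mu : mu \in SS -> [/\ pt mu \in SS, pt mu != mu & pt (pt mu) = mu].
Proof.
rewrite in_setU => /orP[muS | muSb].
  have barS : bar mu \in Sbar by rewrite -himg imset_f.
  have barNS : bar mu \notin S by rewrite (disjointFl hSSbar barS).
  rewrite /partner muS (negbTE barNS) in_setU barS orbT; split => //.
    by apply: contraNneq barNS => ->.
  by case: pickP => [s /andP[sS /eqP]|/(_ mu)]; [exact: hinj | rewrite muS eqxx].
have muNS : mu \notin S by rewrite (disjointFl hSSbar muSb).
move: muSb; rewrite -himg => /imsetP[s0 s0S mu_s0].
rewrite /partner (negbTE muNS).
case: pickP => [s /andP[sS /eqP s_mu]|/(_ s0)] /=; last by rewrite s0S -mu_s0 eqxx.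
by rewrite in_setU sS s_mu; split => //; apply: contraNneq muNS => <-.
Qed.

Definition paired (a b : X) := (a \in SS) && ((b == a) || (b == pt a)).

Lemma paired_refl a : paired a a = (a \in SS).
Proof. by rewrite /paired eqxx andbT. Qed.

Lemma paired_partner a : a \in SS -> paired a (pt a).
Proof. by move=> aS; rewrite /paired aS eqxx orbT. Qed.

Lemma paired_mem a b : paired a b -> (a \in SS) && (b \in SS).
Proof.
case/andP=> aS /orP[/eqP->|/eqP->]; rewrite aS //.
by case: (partner_spec aS).
Qed.

Lemma paired_sym a b : paired a b -> paired b a.
Proof.
move=> ab; case/andP: (paired_mem ab) => aS bS; case/andP: ab => _ /orP[/eqP->|/eqP->].
  by rewrite paired_refl aS.
by case: (partner_spec aS) => pS _ ppa; rewrite /paired pS ppa eqxx orbT.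
Qed.

Lemma pairedC a b : paired a b = paired b a.
Proof. by apply/idP/idP => /paired_sym. Qed.

Lemma paired_trans a b c : paired a b -> paired b c -> paired a c.
Proof.
move=> ab; case/andP: (paired_mem ab) => aS _.
case/andP: ab => _ /orP[/eqP->|/eqP->] //.
case: (partner_spec aS) => _ _ ppa.
case/andP => _ /orP[/eqP->|/eqP->]; first exact: paired_partner.
by rewrite ppa paired_refl.
Qed.

Lemma paired_eq a b c : paired a b -> paired a c = paired b c.
Proof.
move=> ab; apply/idP/idP => [|bc]; last exact: paired_trans bc.
by apply: paired_trans; rewrite pairedC.
Qed.

Lemma paired_partnerR a b : b \in SS -> paired a (pt b) = paired a b.
Proof.
move=> bS; rewrite ![paired a _]pairedC; apply/esym/paired_eq.
exact: paired_partner.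
Qed.

Local Notation nab := (nabla51 T S bar).

Local Notation sig := (sigma51 S Sbar bar).

Lemma interp_Gam51 mu a b : interp (Gam51 T S bar mu a b) = (paired mu a && paired mu b)%:R.
Proof.
rewrite /Gam51 /paired -notin_T.
by case: (mu \in T); rewrite ?interp_pzero ?interp_pconst.
Qed.

Definition pair_sum (W : X -> R) a b := if paired a b then W a + W (pt a) else 0.

Lemma pair_sumC W a b : pair_sum W a b = pair_sum W b a.
Proof.
rewrite /pair_sum -pairedC; case: ifP => // ab.
case/andP: (ab) => aS /orP[/eqP->|/eqP->] //.
by case: (partner_spec aS) => _ _ ->; rewrite addrC.
Qed.

Lemma sum_paired (F : X -> R) a b :
  \sum_(mu <- enum X) F mu * (paired mu a && paired mu b)%:R = pair_sum F a b.
Proof.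
rewrite /pair_sum; case: ifP => [ab | not_ab]; last first.
  rewrite big1 // => mu _; case: (boolP (paired mu a && _)) => [/andP[ma mb]|_].
    by rewrite (paired_trans (paired_sym ma) mb) in not_ab.
  by rewrite mulr0.
case/andP: (paired_mem ab) => aS _; have [_ pa _] := partner_spec aS.
have in_pair mu : (paired mu a && paired mu b)%:R = (mu == a)%:R + (mu == pt a)%:R :> R.
  rewrite !(pairedC mu) -(paired_eq mu ab) andbb /paired aS.
  by case: (eqVneq mu a) => [->|_]; rewrite ?[a == pt a]eq_sym ?(negbTE pa) /= ?addr0 ?add0r.
under eq_bigr do rewrite in_pair mulrDr.
by rewrite big_split /= !sum_enum_delta.
Qed.

Lemma interp_nabla51 w a b : interp (nab w a b) =
  pair_sum (fun mu => interp (w mu)) a b + (tau a (interp (w b)) - interp (w b)).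
Proof.
rewrite /nabla51 /add2 /psum2 interp_padd !interp_psum; congr (_ + _).
  by rewrite -sum_paired; apply: eq_bigr => mu _; rewrite interp_pmul interp_Gam51.
rewrite (sum_enum_only1 _ b) => [|i /negbTE ib]; first by rewrite /tb1 eqxx interp_dpoly.
by rewrite /tb1 eq_sym ib interp_pzero.
Qed.

Lemma interp_nabla51_e1 mu a b : interp (nab (e1 mu) a b) = (paired mu a && paired mu b)%:R.
Proof.
rewrite interp_nabla51 interp_e1 rmorph_nat subrr addr0 -sum_paired.
rewrite (sum_enum_only1 _ mu) => [|i /negbTE imu]; first by rewrite interp_e1 eqxx mul1r.
by rewrite interp_e1 imu mul0r.
Qed.

Definition sigma_index (p : X * X) : X * X :=
  if p.1 \in SS then
    if p.2 == p.1 then (pt p.1, pt p.1) else if p.2 == pt p.1 then p else (p.2, p.1)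
  else (p.2, p.1).

Lemma sigma_indexK : involutive sigma_index.
Proof.
case=> mu nu; rewrite /sigma_index /=.
case: (boolP (mu \in SS)) => [muS | muNS].
  case: (partner_spec muS) => pS pm ppm.
  case: (eqVneq nu mu) => [->|num] /=; first by rewrite pS eqxx ppm.
  case: (eqVneq nu (pt mu)) => [->|nup] /=; first by rewrite muS (negbTE pm) eqxx.
  case: ifP => //= nuS; rewrite eq_sym (negbTE num).
  by case: (partner_spec nuS) => _ _ ppn; case: eqVneq => // mu_pnu; rewrite mu_pnu ppn eqxx in nup.
case: ifP => //= nuS; case: (partner_spec nuS) => pS _ _.
case: eqVneq => [mu_nu|_]; first by rewrite mu_nu nuS in muNS.
by case: eqVneq => // mu_pnu; rewrite mu_pnu pS in muNS.
Qed.

Lemma sig51E mu nu :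
  sig51 S Sbar bar mu nu = e2 (sigma_index (mu, nu)).1 (sigma_index (mu, nu)).2.
Proof. by rewrite /sig51 /sigma_index /=; do 3?case: ifP. Qed.

Lemma interp_sig51 mu nu a b : interp (sig51 S Sbar bar mu nu a b) =
  ((mu == (sigma_index (a, b)).1) && (nu == (sigma_index (a, b)).2))%:R.
Proof.
rewrite sig51E interp_e2; congr (_%:R).
have e : ((a, b) == sigma_index (mu, nu)) = (sigma_index (a, b) == (mu, nu)).
  by rewrite -[(a, b) in LHS]sigma_indexK (inj_eq (can_inj sigma_indexK)).
move: e; case: (sigma_index (mu, nu)) => x y; case: (sigma_index (a, b)) => x' y' /=.
by rewrite !xpair_eqE => ->; rewrite (eq_sym x') (eq_sym y').
Qed.

Lemma interp_sigma51 t a b :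
  interp (sig t a b) = interp (t (sigma_index (a, b)).1 (sigma_index (a, b)).2).
Proof.
rewrite /sigma51 interp_allpairs.
under eq_bigr do under eq_bigr do rewrite interp_pmul interp_sig51.
case: (sigma_index (a, b)) => x y /=.
rewrite (sum_enum_only1 _ x) => [|mu /negbTE mux].
  rewrite (sum_enum_only1 _ y) => [|nu /negbTE nuy]; first by rewrite !eqxx mulr1.
  by rewrite nuy andbF mulr0.
by rewrite big1 // => nu _; rewrite mux mulr0.
Qed.

Lemma tau_sigma_index a b (q : R) :
  tau (sigma_index (a, b)).1 (tau (sigma_index (a, b)).2 q) = tau a (tau b q).
Proof.
rewrite /sigma_index /=; case: ifP => _; last exact: tauC.
case: eqP => [->|_]; first by rewrite !tauK.
by case: eqP => _; [|exact: tauC].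
Qed.

Lemma nabla51_eq w w' : eq1 w w' -> eq2 (nab w) (nab w').
Proof.
move=> ww' a b; apply/peqP; rewrite !interp_nabla51 /pair_sum.
have e mu : interp (w mu) = interp (w' mu) by apply/peqP; exact: ww'.
by rewrite !e.
Qed.

Lemma nabla51_add w w' : eq2 (nab (add1 w w')) (add2 (nab w) (nab w')).
Proof.
move=> a b; apply/peqP; rewrite [RHS]interp_padd !interp_nabla51 /pair_sum /add1.
by rewrite !interp_padd; case: ifP => _; ring_char2.
Qed.

Lemma nabla51_lmul p w :
  eq2 (nab (lmul1 p w)) (add2 (lmul2 p (nab w)) (tens11 V (dpoly V p) w)).
Proof.
move=> a b; apply/peqP; rewrite [RHS]interp_padd interp_pmul !interp_nabla51 interp_tens11.
by rewrite interp_dpoly /pair_sum /lmul1 !interp_pmul; case: ifP => _; ring_char2.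
Qed.

Lemma sigma51_bimodule_map : bimodule_map2 V sig.
Proof.
split; first by move=> t t' tt' a b; apply/peqP; rewrite !interp_sigma51; apply/peqP.
split; first by move=> t t' a b; apply/peqP; rewrite interp_sigma51 !interp_padd !interp_sigma51.
split; first by move=> p t a b; apply/peqP; rewrite interp_sigma51 !interp_pmul interp_sigma51.
move=> p t a b; apply/peqP.
by rewrite interp_sigma51 !interp_ract2 interp_sigma51 tau_sigma_index.
Qed.

Lemma nabla51_ract w p :
  eq2 (nab (ract1 V w p)) (add2 (ract2 V (nab w) p) (sig (tens11 V w (dpoly V p)))).
Proof.
move=> a b; apply/peqP.
rewrite [RHS]interp_padd interp_sigma51 interp_ract2 !interp_nabla51 interp_tens11.
rewrite interp_dpoly /pair_sum !interp_ract1 /sigma_index /= !tauM !comp_mpolyB.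
case: (boolP (a \in SS)) => aS; last first.
  by rewrite /paired (negbTE aS) /= (tauC b a); ring_char2.
case: (eqVneq b a) => [->|ba].
  by rewrite /= paired_refl aS !tauK; ring_char2.
case: (eqVneq b (pt a)) => [->|bpa].
  by rewrite /= paired_partner //; ring_char2.
by rewrite /paired aS (negbTE ba) (negbTE bpa) /= (tauC b a); ring_char2.
Qed.

Lemma nabla51_bimodule_connection : bimodule_connection V nab sig.
Proof.
split; first exact: nabla51_eq.
split; first exact: nabla51_add.
split; first exact: nabla51_lmul.
split; first exact: sigma51_bimodule_map.
exact: nabla51_ract.
Qed.

Lemma sigma51_invertible : invertible2 sig.
Proof.
exists sig => t.
by split=> a b; apply/peqP; rewrite !interp_sigma51 -surjective_pairing sigma_indexK.
Qed.

Lemma nabla51_torsion_free : torsion_free V nab.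
Proof.
move=> w; apply: inN2_sym => a b.
rewrite [LHS]interp_padd [RHS]interp_padd !interp_nabla51 /dform1 !interp_dpoly.
by rewrite pair_sumC; ring_char2.
Qed.

Lemma interp_nabla_id_gdiag a b c :
  interp (psum3 (fun mu => psum3 (fun nu =>
    lmul3 (pconst X (gdiag mu nu)) (tb2 (nab (e1 mu)) nu))) a b c)
  = (paired c a && paired c b)%:R.
Proof.
rewrite /psum3 interp_psum (sum_enum_only1 _ c) => [|mu /negbTE mu_c].
  rewrite interp_psum (sum_enum_only1 _ c) => [|nu /negbTE nu_c].
    by rewrite interp_pmul interp_pconst /gdiag /tb2 eqxx mul1r interp_nabla51_e1.
  by rewrite interp_pmul /tb2 eq_sym nu_c interp_pzero mulr0.
rewrite interp_psum big1 // => nu _; rewrite interp_pmul interp_pconst /gdiag /tb2.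
case: (eqVneq mu nu) => [<-|_]; last by rewrite mul0r.
by rewrite eq_sym mu_c interp_pzero mulr0.
Qed.

Lemma interp_id_nabla_gdiag a b c :
  interp (psum3 (fun mu => psum3 (fun nu =>
    lmul3 (pconst X (gdiag mu nu)) (tens12 V (e1 mu) (nab (e1 nu))))) a b c)
  = (paired a b && paired a c)%:R.
Proof.
rewrite /psum3 interp_psum (sum_enum_only1 _ a) => [|mu /negbTE mu_a].
  rewrite interp_psum (sum_enum_only1 _ a) => [|nu /negbTE nu_a].
    rewrite interp_pmul interp_pconst /gdiag eqxx mul1r interp_tens12 interp_e1 eqxx.
    by rewrite interp_nabla51_e1 rmorph_nat mul1r.
  by rewrite interp_pmul interp_pconst /gdiag eq_sym nu_a mul0r.
rewrite interp_psum big1 // => nu _.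
by rewrite interp_pmul interp_tens12 interp_e1 eq_sym mu_a mul0r mulr0.
Qed.

Lemma paired_sigma_index a b c :
  paired (sigma_index (a, b)).1 (sigma_index (a, b)).2 && paired (sigma_index (a, b)).1 c
  = paired c a && paired c b.
Proof.
have unpaired : ~~ paired a b -> paired b a && paired b c = paired c a && paired c b.
  move=> /negbTE ab; rewrite pairedC ab; apply/esym/negbTE/negP => /andP[ca cb].
  by rewrite (paired_trans (paired_sym ca) cb) in ab.
rewrite /sigma_index /=; case: (boolP (a \in SS)) => aS; last first.
  by apply: unpaired; rewrite /paired (negbTE aS).
have [pS _ _] := partner_spec aS.
have pair_a c' : paired c' a = paired c' (pt a).
  by rewrite (pairedC c' a) (pairedC c') (paired_eq c' (paired_partner aS)).
case: (eqVneq b a) => [->|ba] /=; first by rewrite paired_refl pS andbb pairedC -pair_a.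
case: (eqVneq b (pt a)) => [->|bpa] /=; first by rewrite paired_partner // -pair_a andbb pairedC.
by apply: unpaired; rewrite /paired aS negb_or ba bpa.
Qed.

Lemma nabla51_metric_compatible : metric_compatible V (@gdiag X) nab sig.
Proof.
move=> a b c; apply/peqP; rewrite interp_pzero interp_padd interp_nabla_id_gdiag.
by rewrite /sigma_id interp_sigma51 interp_id_nabla_gdiag paired_sigma_index (addrr_pchar2 pchar2).
Qed.

Lemma interp_curvature w a b c : interp (curvature V nab w a b c) =
  tau a (interp (nab w b c)) - interp (nab w b c) + pair_sum (fun be => interp (nab w a be)) b c.
Proof.
rewrite /curvature /psum3 interp_psum -sum_paired.
rewrite (eq_bigr (fun be => (if c == be then tau a (interp (nab w b be)) - interp (nab w b be)
    else 0) + interp (nab w a be) * (paired be b && paired be c)%:R)) => [|be _]; last first.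
  rewrite interp_padd /tb2 interp_tens12 interp_nabla51_e1 rmorph_nat.
  by case: eqP => _; rewrite ?interp_pzero /dform1 ?interp_dpoly.
rewrite big_split /= (sum_enum_only1 _ c) ?eqxx // => be /negbTE.
by rewrite eq_sym => ->.
Qed.

Lemma nabla51_curvature_coef w a b c : interp (curvature V nab w a b c) =
  tau a (tau b (interp (w c))) - tau a (interp (w c)) - tau b (interp (w c)) + interp (w c).
Proof.
rewrite interp_curvature /pair_sum !interp_nabla51 /pair_sum.
case: ifP => bc; last by ring_char2.
case/andP: (paired_mem bc) => bS _.
by rewrite paired_partnerR //; case: ifP => _; ring_char2.
Qed.

Lemma nabla51_curvature_zero : curvature_zero V nab.
Proof.
move=> w; apply: inN3_sym => a b c; rewrite !nabla51_curvature_coef (tauC a b).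
by ring_char2.
Qed.

End Proposition51.
End FunctionAlgebraCalculus.

Theorem proposition5p1 (X : finType) (T S Sbar : {set X}) (bar : X -> X)
    (hTS : [disjoint T & S]) (hTSbar : [disjoint T & Sbar])
    (hSSbar : [disjoint S & Sbar]) (hcover : T :|: S :|: Sbar = [set: X])
    (hinj : {in S &, injective bar}) (himg : bar @: S = Sbar) :
  is_qmetric (@deltaV X) (@gdiag X) /\
  is_QLC (@deltaV X) (@gdiag X) (nabla51 T S bar) (sigma51 S Sbar bar) /\
  curvature_zero (@deltaV X) (nabla51 T S bar).
Proof.
split; first exact: gdiag_qmetric.
split; last exact: nabla51_curvature_zero hTS hTSbar hSSbar hcover hinj himg.
split; first exact: nabla51_bimodule_connection hTS hTSbar hSSbar hcover hinj himg.
split; first exact: sigma51_invertible hSSbar hinj himg.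
split; first exact: nabla51_torsion_free hTS hTSbar hSSbar hcover hinj himg.
exact: nabla51_metric_compatible hTS hTSbar hSSbar hcover hinj himg.
Qed.
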